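(* Let $G=(V,E_r,E_b)$ be a two-colored graph that contains no monochromatic $K_3$ and no monochromatic $P_3$ as induced subgraphs. Then every vertex of $G$ is incident with at most two blue edges and with at most two red edges.
   Context: A two-colored graph $G=(V,E_r,E_b)$ is a finite simple undirected graph whose edge set is partitioned into red edges $E_r$ and blue edges $E_b$. A monochromatic $K_3$ is a triangle all three of whose edges have the same color. A monochromatic $P_3$ is an induced path on three vertices $u,v,w$ (edges $\{u,v\},\{v,w\}$, non-edge $\{u,w\}$) whose two edges have the same color. *)

From mathcomp Require Import all_boot.
Set Implicit Arguments. Unset Strict Implicit. Unset Printing Implicit Defensive.

Record two_colored_graph (T : finType) := TwoColoredGraph {
  red : rel T;
  blue : rel T;
  red_sym : symmetric red;
  blue_sym : symmetric blue;
  red_irr : irreflexive red;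
  blue_irr : irreflexive blue;
  red_blue_disj : forall x y, ~~ (red x y && blue x y)
}.

Definition adj (T : finType) (G : two_colored_graph T) (x y : T) : bool :=
  red G x y || blue G x y.

Definition mono_K3 (T : finType) (c : rel T) (u v w : T) : Prop :=
  [/\ c u v, c v w & c u w].

Definition mono_P3 (T : finType) (G : two_colored_graph T) (c : rel T)
  (u v w : T) : Prop :=
  [/\ u != w, c u v, c v w & ~~ adj G u w].

Definition mono_K3_free (T : finType) (G : two_colored_graph T) : Prop :=
  forall u v w, ~ mono_K3 (red G) u v w /\ ~ mono_K3 (blue G) u v w.

Definition mono_P3_free (T : finType) (G : two_colored_graph T) : Prop :=
  forall u v w, ~ mono_P3 G (red G) u v w /\ ~ mono_P3 G (blue G) u v w.

Definition red_deg (T : finType) (G : two_colored_graph T) (v : T) : nat :=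
  #|[set x | red G v x]|.
Definition blue_deg (T : finType) (G : two_colored_graph T) (v : T) : nat :=
  #|[set x | blue G v x]|.

From mathcomp Require Import all_boot.

(* Let c be one color and d the other.  Two distinct c-neighbours p, q of v
   cannot be c-adjacent (no c-triangle), so they must be d-adjacent (else
   p - v - q is an induced c-path).  Hence the c-neighbourhood of v is a
   d-clique, and having no d-triangle it has at most two vertices. *)

Section MonochromaticNeighbourhood.

Variables (T : finType) (c d : rel T).
Hypothesis c_sym : symmetric c.
Hypothesis c_K3_free : forall x y z, ~ mono_K3 c x y z.
Hypothesis d_K3_free : forall x y z, ~ mono_K3 d x y z.
Hypothesis c_path_closed :
  forall {x y z : T}, x != z -> c x y -> c y z -> c x z || d x z.

Lemma neighbours_adj (v p q : T) : c v p -> c v q -> p != q -> d p q.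
Proof.
move=> cvp cvq npq.
have ncpq : ~~ c p q by apply/negP => cpq; apply: (c_K3_free v p q).
rewrite c_sym in cvp.
by move: (c_path_closed npq cvp cvq); rewrite (negbTE ncpq).
Qed.

Lemma card_neighbours_le2 (v : T) : #|[set x | c v x]| <= 2.
Proof.
rewrite leqNgt; apply/card_gt2P => -[x [y [z [[]]]]].
rewrite !inE => cvx cvy cvz [nxy nyz nzx].
by apply: (d_K3_free x y z); split; apply: (neighbours_adj v);
  rewrite // eq_sym.
Qed.

End MonochromaticNeighbourhood.

Lemma adj_of_not_mono_P3 (T : finType) (G : two_colored_graph T) (c : rel T)
    (x y z : T) :
  ~ mono_P3 G c x y z -> x != z -> c x y -> c y z -> adj G x z.
Proof. by move=> nP3 nxz cxy cyz; apply/negPn/negP => nadj; apply: nP3. Qed.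

Theorem lemma4 (T : finType) (G : two_colored_graph T) :
  mono_K3_free G -> mono_P3_free G ->
  forall v : T, (blue_deg G v <= 2)%N /\ (red_deg G v <= 2)%N.
Proof.
move=> K3_free P3_free v.
have red_K3_free x y z : ~ mono_K3 (red G) x y z by case: (K3_free x y z).
have blue_K3_free x y z : ~ mono_K3 (blue G) x y z by case: (K3_free x y z).
split.
  apply: (@card_neighbours_le2 _ _ (red G) (blue_sym G)) => // x y z nxz bxy byz.
  rewrite orbC; exact: adj_of_not_mono_P3 (P3_free x y z).2 nxz bxy byz.
apply: (@card_neighbours_le2 _ _ (blue G) (red_sym G)) => // x y z nxz rxy ryz.
exact: adj_of_not_mono_P3 (P3_free x y z).1 nxz rxy ryz.
Qed.
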